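(* For any $\lambda>0$ and any configuration $\eta$, $$\mathrm{w}^*_n = 2\sup\{\varepsilon\ge0:\ \mathcal V^{(1+\varepsilon)}\in\mathrm{cross}^*(n)\}$$ and $$\mathrm{w}_n\ \ge\ 2\sqrt{1-\inf\{r\le 1:\ \mathcal O^{(r)}\in \mathrm{cross}(n+\sqrt{1-r^2},\,n-1)\}^2},$$ where the supremum is taken to be $0$ and the infimum to be $1$ when the respective set is empty.
   Context: $\eta$ is a (locally finite) point configuration in $\mathbb R^2$ (a Poisson process of intensity $\lambda\cdot\mathrm{Leb}$ under $\mathbb P_\lambda$). For $r\ge0$, $\mathcal O^{(r)}=\bigcup_{x\in\mathrm{supp}(\eta)}B(x,r)$ and $\mathcal V^{(r)}=\mathbb R^2\setminus\mathcal O^{(r)}$; $\mathcal O=\mathcal O^{(1)}$, $\mathcal V=\mathcal V^{(1)}$. For a set $S$, ''$S\in\mathrm{cross}(a,h)$'' means $S$ contains a path inside $[-a,a]\times[-h,h]$ joining its left and right sides; $\mathrm{cross}(n)=\mathrm{cross}(n,n)$, and ''$S\in\mathrm{cross}^*(n)$'' means $S$ contains a path inside $[-n,n]^2$ joining its left and right sides. A horizontal crossing of $[-n,n]^2$ is a path in $[-n,n]^2$ joining $\{-n\}\times[-n,n]$ to $\{n\}\times[-n,n]$. $\mathrm{w}_n=2\sup_\gamma\mathrm{dist}(\gamma,\mathcal V)$ over horizontal crossings $\gamma\subset\mathcal O$ and $\mathrm{w}^*_n=2\sup_\gamma\mathrm{dist}(\gamma,\mathcal O)$ over horizontal crossings $\gamma\subset\mathcal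 V$ (each $0$ if no such crossing exists). *)

From HB Require Import structures.
From mathcomp Require Import all_boot all_order all_algebra.
From mathcomp Require Import all_classical all_reals all_analysis.
Set Implicit Arguments. Unset Strict Implicit. Unset Printing Implicit Defensive.
Import Order.TTheory GRing.Theory Num.Theory.
Import numFieldNormedType.Exports.
Local Open Scope classical_set_scope.
Local Open Scope ring_scope.

Section BooleanModel.
Variable R : realType.

Definition bm_edist (x y : R * R) : R :=
  Num.sqrt ((x.1 - y.1) ^+ 2 + (x.2 - y.2) ^+ 2).

Definition bm_cball (x : R * R) (r : R) : set (R * R) := [set y | bm_edist x y <= r].

(* eta is represented by its support supp(eta), a set of points of R^2 *)
Definition bm_locally_finite (eta : set (R * R)) : Prop :=
  forall r : R, finite_set [set x | eta x /\ bm_edist (0, 0) x <= r].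

Definition bm_occupied (eta : set (R * R)) (r : R) : set (R * R) :=
  \bigcup_(x in eta) bm_cball x r.
Definition bm_vacant (eta : set (R * R)) (r : R) : set (R * R) :=
  ~` bm_occupied eta r.

Definition bm_rect (a h : R) : set (R * R) :=
  [set p | (- a <= p.1 <= a) /\ (- h <= p.2 <= h)].

Definition bm_I01 : set R := [set t | 0 <= t <= 1].

Definition bm_crossing_path (a h : R) (g : R -> R * R) : Prop :=
  {within bm_I01, continuous g} /\
  (forall t, bm_I01 t -> bm_rect a h (g t)) /\
  (g 0).1 = - a /\ (g 1).1 = a.

Definition bm_cross (S : set (R * R)) (a h : R) : Prop :=
  exists g, bm_crossing_path a h g /\ (forall t, bm_I01 t -> S (g t)).

Definition bm_cross_star (S : set (R * R)) (n : R) : Prop :=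
  exists g, bm_crossing_path n n g /\ (forall t, bm_I01 t -> S (g t)).

(* dist(A,B) = inf of Euclidean distances (+oo if A or B is empty) *)
Definition bm_set_dist (A B : set (R * R)) : \bar R :=
  ereal_inf [set d | exists x y, A x /\ B y /\ d = (bm_edist x y)%:E].

Definition bm_sup0 (S : set (\bar R)) : \bar R :=
  if `[< S = set0 >] then 0%E else ereal_sup S.

Definition bm_inf1 (S : set R) : R :=
  if `[< S = set0 >] then 1 else inf S.

Definition bm_w_occ (eta : set (R * R)) (n : R) : \bar R :=
  (2%:E * bm_sup0 [set d | exists g, bm_crossing_path n n g /\
     (forall t, bm_I01 t -> bm_occupied eta 1 (g t)) /\
     d = bm_set_dist (g @` bm_I01) (bm_vacant eta 1)])%E.

Definition bm_w_vac (eta : set (R * R)) (n : R) : \bar R :=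
  (2%:E * bm_sup0 [set d | exists g, bm_crossing_path n n g /\
     (forall t, bm_I01 t -> bm_vacant eta 1 (g t)) /\
     d = bm_set_dist (g @` bm_I01) (bm_occupied eta 1)])%E.

End BooleanModel.

Arguments bm_sup0 {R} S.
Arguments bm_inf1 {R} S.
Arguments bm_set_dist {R} A B.

From HB Require Import structures.
From mathcomp Require Import all_boot all_order all_algebra.
From mathcomp Require Import all_classical all_reals all_analysis.
From mathcomp Require Import ring lra.

(* The identity for w*_n is a reformulation: a vacant crossing at distance > e
   from O lies in V^(1+e), and a crossing inside V^(1+e) is at distance >= e
   from O.

   For w_n, take a crossing of the wider box inside O^(r) and r < r' < 1.
   Replacing each of its points p by the barycentre q of the Poisson points c,
   weighted by max(0, r' - |c - p|), gives a continuous path; by Huygens'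
   formula the weighted mean of |z - c|^2 stays below 1 whenever
   |z - q|^2 < |p - q|^2 + 1 - r'^2, so the disc of radius sqrt(1 - r'^2)
   around q lies in O. The box leaves room sqrt(1 - r^2) on each side, enough
   to prolong this path horizontally to both sides of [-n, n]^2; cutting out a
   crossing yields an occupied crossing at distance sqrt(1 - r'^2) from V, and
   letting r' decrease to the infimum gives the bound. *)

Set Implicit Arguments.
Unset Strict Implicit.
Unset Printing Implicit Defensive.
Import Order.TTheory GRing.Theory Num.Theory.
Import numFieldNormedType.Exports.
Local Open Scope classical_set_scope.
Local Open Scope ring_scope.

Section EuclideanPlane.
Variable R : realType.
Implicit Types (x y z : R * R) (r : R).

Definition sqdist x y : R := (x.1 - y.1) ^+ 2 + (x.2 - y.2) ^+ 2.

Lemma sqdist_ge0 x y : 0 <= sqdist x y.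
Proof. by rewrite addr_ge0 // sqr_ge0. Qed.

Lemma sqdistC x y : sqdist x y = sqdist y x.
Proof. by rewrite /sqdist; ring. Qed.

Lemma sqdistxx x : sqdist x x = 0.
Proof. by rewrite /sqdist !subrr expr0n /= addr0. Qed.

Lemma bm_edistxx x : bm_edist x x = 0.
Proof. by rewrite /bm_edist -/(sqdist x x) sqdistxx sqrtr0. Qed.

Lemma sqr_bm_edist x y : bm_edist x y ^+ 2 = sqdist x y.
Proof. exact/sqr_sqrtr/sqdist_ge0. Qed.

Lemma bm_edist_ge0 x y : 0 <= bm_edist x y.
Proof. exact: sqrtr_ge0. Qed.

Lemma bm_edistC x y : bm_edist x y = bm_edist y x.
Proof. by rewrite /bm_edist -/(sqdist x y) sqdistC. Qed.

Lemma bm_edist_leE x y r : 0 <= r -> (bm_edist x y <= r) = (sqdist x y <= r ^+ 2).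
Proof.
move=> r0; rewrite /bm_edist -/(sqdist x y).
by rewrite -{1}(ger0_norm r0) -sqrtr_sqr ler_sqrt // sqr_ge0.
Qed.

Lemma bm_edist_ltE x y r : 0 <= r -> (bm_edist x y < r) = (sqdist x y < r ^+ 2).
Proof. by move=> r0; rewrite -sqr_bm_edist ltr_pXn2r // nnegrE bm_edist_ge0. Qed.

Lemma bm_edist_triangle x y z : bm_edist x z <= bm_edist x y + bm_edist y z.
Proof.
have [a0 b0] := (bm_edist_ge0 x y, bm_edist_ge0 y z).
rewrite bm_edist_leE ?addr_ge0 // sqrrD !sqr_bm_edist.
set u1 := x.1 - y.1; set u2 := x.2 - y.2; set v1 := y.1 - z.1; set v2 := y.2 - z.2.
have -> : sqdist x z = sqdist x y + sqdist y z + 2 * (u1 * v1 + u2 * v2).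
  by rewrite /sqdist /u1 /u2 /v1 /v2; ring.
(* Cauchy-Schwarz, via Lagrange's identity *)
have lagrange : (bm_edist x y * bm_edist y z) ^+ 2 - (u1 * v1 + u2 * v2) ^+ 2
    = (u1 * v2 - u2 * v1) ^+ 2.
  by rewrite exprMn !sqr_bm_edist /sqdist -/u1 -/u2 /v1 /v2 /u1 /u2; ring.
have : `|u1 * v1 + u2 * v2| <= bm_edist x y * bm_edist y z.
  rewrite -sqrtr_sqr -(ger0_norm (mulr_ge0 a0 b0)) -sqrtr_sqr ler_sqrt ?sqr_ge0 //.
  by rewrite -subr_ge0 lagrange sqr_ge0.
have := ler_norm (u1 * v1 + u2 * v2); lra.
Qed.

Lemma normB2_le_bm_edist x y : `|x.2 - y.2| <= bm_edist x y.
Proof. by rewrite -sqrtr_sqr ler_sqrt ?sqdist_ge0 // lerDr sqr_ge0. Qed.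

Lemma sqrB1_le_sqdist x y : (x.1 - y.1) ^+ 2 <= sqdist x y.
Proof. by rewrite lerDl sqr_ge0. Qed.

Lemma bm_edist_le_normD x y : bm_edist x y <= `|x.1 - y.1| + `|x.2 - y.2|.
Proof.
rewrite bm_edist_leE ?addr_ge0 // /sqdist [in X in _ <= X]sqrrD.
rewrite -(real_normK (num_real (x.1 - y.1))) -(real_normK (num_real (x.2 - y.2))).
by rewrite lerD2r lerDl mulrn_wge0 // mulr_ge0.
Qed.

Lemma continuous_bm_edist (T : topologicalType) (c : R * R) (G : T -> R * R) :
  continuous G -> continuous (fun t => bm_edist c (G t)).
Proof.
move=> GC x.
have coordC (f : R * R -> R) : {for G x, continuous f} ->
    {for x, continuous (fun t => (f c - f (G t)) * (f c - f (G t)))}.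
  move=> fC; have fGC : {for x, continuous (fun t => f c - f (G t))}.
    by apply: continuousB; [exact: cvg_cst | exact: continuous_comp (GC x) fC].
  exact: (continuousM fGC fGC).
have sqdistC : {for x, continuous (fun t => sqdist c (G t))}.
  have -> : (fun t => sqdist c (G t)) = (fun t =>
      (c.1 - (G t).1) * (c.1 - (G t).1) + (c.2 - (G t).2) * (c.2 - (G t).2)).
    by apply/funext => t; rewrite /sqdist !expr2.
  exact: continuousD (coordC fst cvg_fst) (coordC snd cvg_snd).
exact: continuous_comp sqdistC (@sqrt_continuous R _).
Qed.

End EuclideanPlane.

Section SupremumConventions.
Variable R : realType.

Lemma bm_sup0E (S : set (\bar R)) : (forall x, S x -> (0 <= x)%E) ->
  bm_sup0 S = ereal_sup (S `|` [set 0%E]).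
Proof.
move=> S_ge0; rewrite /bm_sup0; case: asboolP => [->|/eqP/set0P [x Sx]].
  by rewrite set0U ereal_sup1.
apply/le_anti/andP; split; first by apply/ereal_sup_le => y Sy; left.
apply: ge_ereal_sup => y [/ereal_sup_ubound //|->].
exact: le_trans (S_ge0 _ Sx) (ereal_sup_ubound Sx).
Qed.

Lemma exists_EFin_between (m : R) (d : \bar R) : (m%:E < d)%E ->
  exists2 e : R, m < e & (e%:E < d)%E.
Proof.
case: d => [d||] //= md; last by exists (m + 1); rewrite ?ltey //; lra.
by exists ((m + d) / 2); move: md; rewrite !lte_fin; lra.
Qed.

End SupremumConventions.

Section SetDistance.
Variables (R : realType) (eta : set (R * R)).
Implicit Types (A B : set (R * R)) (e : R).

Lemma bm_set_dist_ge0 A B : (0 <= bm_set_dist A B)%E.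
Proof.
by apply: le_ereal_inf_tmp => _ [x [y [_ [_ ->]]]]; rewrite lee_fin bm_edist_ge0.
Qed.

Lemma bm_set_dist_le_edist A B x y : A x -> B y ->
  (bm_set_dist A B <= (bm_edist x y)%:E)%E.
Proof. by move=> Ax By; apply: ereal_inf_lbound; exists x, y. Qed.

Lemma bm_occupied_le {r1 r2} : r1 <= r2 -> bm_occupied eta r1 `<=` bm_occupied eta r2.
Proof. by move=> r12 p [c ec cp]; exists c => //; apply: le_trans r12. Qed.

Lemma bm_vacant_le {r1 r2} : r1 <= r2 -> bm_vacant eta r2 `<=` bm_vacant eta r1.
Proof. by move=> r12 p Vp /(bm_occupied_le r12). Qed.

Lemma bm_set_dist_occupied_ge A e : A `<=` bm_vacant eta (1 + e) ->
  (e%:E <= bm_set_dist A (bm_occupied eta 1))%E.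
Proof.
move=> AV; apply: le_ereal_inf_tmp => _ [x [y [Ax [[c ec cy] ->]]]].
have cx : 1 + e < bm_edist c x.
  by rewrite ltNge; apply/negP => cx; apply: (AV _ Ax); exists c.
have := bm_edist_triangle c y x; rewrite lee_fin (bm_edistC x) /bm_cball /= in cy *; lra.
Qed.

Lemma bm_vacant_of_set_dist_occupied_gt A e : 0 <= e ->
  (e%:E < bm_set_dist A (bm_occupied eta 1))%E -> A `<=` bm_vacant eta (1 + e).
Proof.
move=> e0 eAO p Ap [c ec]; rewrite /bm_cball /=; set L := bm_edist c p => cp.
have [L1|L1] := leP L 1.
  have Op : bm_occupied eta 1 p by exists c.
  have := lt_le_trans eAO (bm_set_dist_le_edist Ap Op).
  by rewrite bm_edistxx lte_fin; lra.
(* the point of the segment [c, p] at distance 1 from c *)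
have Ln0 : L != 0 by rewrite gt_eqF // (lt_trans ltr01).
pose y : R * R := (c.1 + (p.1 - c.1) / L, c.2 + (p.2 - c.2) / L).
have cy : sqdist c y = 1.
  transitivity (sqdist c p / L ^+ 2); first by rewrite /sqdist /=; field.
  by rewrite -sqr_bm_edist divff // expf_neq0.
have py : sqdist p y = (L - 1) ^+ 2.
  transitivity (sqdist c p * (1 - L^-1) ^+ 2); first by rewrite /sqdist /=; field.
  by rewrite -sqr_bm_edist -/L; field.
have Oy : bm_occupied eta 1 y.
  by exists c; rewrite // /bm_cball /= bm_edist_leE // cy expr1n.
have := lt_le_trans eAO (bm_set_dist_le_edist Ap Oy).
rewrite /bm_edist -/(sqdist p y) py sqrtr_sqr ger0_norm ?subr_ge0 ?(ltW L1) // lte_fin; lra.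
Qed.

End SetDistance.

Section VacantWidth.
Variables (R : realType) (eta : set (R * R)) (N : R).

Lemma sup0_dist_vacant_crossing :
  bm_sup0 [set d | exists g, bm_crossing_path N N g /\
     (forall t, bm_I01 t -> bm_vacant eta 1 (g t)) /\
     d = bm_set_dist (g @` @bm_I01 R) (bm_occupied eta 1)]
  = bm_sup0 [set d | exists e : R, 0 <= e /\
        bm_cross_star (bm_vacant eta (1 + e)) N /\ d = e%:E].
Proof.
set SL := [set d | _]; set SR := [set d | _].
rewrite !bm_sup0E; first last.
- by move=> _ [g [_ [_ ->]]]; exact: bm_set_dist_ge0.
- by move=> _ [e [e0 [_ ->]]]; rewrite lee_fin.
apply/le_anti/andP; split; apply: ge_ereal_sup => x [|->]; last 1 first.
- by apply: ereal_sup_ubound; right.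
- move=> [g [gN [gV ->]]]; set M := ereal_sup _.
  have M0 : (0 <= M)%E by apply: ereal_sup_ubound; right.
  rewrite leNgt; apply/negP => Md.
  have Mfin : M \is a fin_num by rewrite ge0_fin_numE // (lt_le_trans Md) ?leey.
  have fM0 := fine_ge0 M0.
  move: Md; rewrite -(fineK Mfin) => /exists_EFin_between [e Me ed].
  have SRe : SR e%:E.
    exists e; split; first lra; split => //; exists g; split => // t It.
    by apply: (bm_vacant_of_set_dist_occupied_gt _ ed); [lra | exists t].
  have : (e%:E <= M)%E by apply: ereal_sup_ubound; left.
  by rewrite -(fineK Mfin) lee_fin; lra.
- by apply: ereal_sup_ubound; right.
- move=> [e [e0 [[g [gN gV]] ->]]].
  have gV1 t : bm_I01 t -> bm_vacant eta 1 (g t).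
    by move=> /gV; apply: bm_vacant_le; lra.
  apply: le_trans (ereal_sup_ubound _); last by left; exists g.
  by apply: bm_set_dist_occupied_ge => _ [t It <-]; apply: gV.
Qed.

End VacantWidth.

Section RealLinePaths.
Variable R : realType.
Implicit Types (f : R -> R) (a b c t u : R).

Lemma exists_first_hit f a b c : continuous f -> a <= b -> f a < c -> c <= f b ->
  exists t, [/\ a <= t <= b, f t = c & forall u, a <= u < t -> f u < c].
Proof.
move=> fC ab fa fb; set S := [set u | a <= u <= b /\ c <= f u].
have Sb : S b by rewrite /S /= ab lexx.
have aS : lbound S a by move=> u [/andP[]].
have S_lb : has_lbound S by exists a.
set t := inf S.
have a_le_t : a <= t by apply: lb_le_inf => //; exists b.
have t_le_b : t <= b by apply: ge_inf.
have below u : a <= u < t -> f u < c.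
  case/andP=> au ut; rewrite ltNge; apply/negP => cu.
  have : t <= u by apply: ge_inf => //; rewrite /S /= au cu (le_trans (ltW ut)).
  by rewrite leNgt ut.
exists t; split; rewrite ?a_le_t //; apply/eqP; rewrite eq_le; apply/andP; split.
- rewrite leNgt; apply/negP => ct.
  have : \forall u \near t, c < f u by exact: cvgr_gt (f t) (fC t) _ ct.
  case/nbhs_ballP => e /= e0 near_t.
  have a_t : a < t.
    by rewrite lt_neqAle a_le_t andbT; apply/eqP => a_eq_t; move: ct; rewrite -a_eq_t; lra.
  pose u := Num.max a (t - e / 2).
  have au : a <= u by rewrite le_max lexx.
  have ut : u < t by rewrite gt_max a_t /=; lra.
  have : c < f u.
    apply: near_t; rewrite /ball /= ger0_norm ?subr_ge0 ?ltW //.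
    have : t - e / 2 <= u by rewrite le_max lexx orbT.
    lra.
  by rewrite ltNge ltW // below ?au.
- rewrite leNgt; apply/negP => tc.
  have : \forall u \near t, f u < c by exact: cvgr_lt (f t) (fC t) _ tc.
  case/nbhs_ballP => e /= e0 near_t.
  have [v Sv vt] : exists2 v, S v & v < t + e by apply: inf_lt; [exists b | lra].
  have tv : t <= v by apply: ge_inf.
  have : f v < c by apply: near_t; rewrite /ball /= ler0_norm ?subr_le0 //; lra.
  by case: Sv => _; rewrite leNgt => /negP.
Qed.

Lemma exists_crossing_subinterval f a b lo hi : continuous f -> a <= b -> lo < hi ->
  f a <= lo -> hi <= f b ->
  exists t1 t2, [/\ a <= t1 <= t2, t2 <= b, f t1 = lo, f t2 = hi &
                    forall u, t1 <= u <= t2 -> lo <= f u <= hi].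
Proof.
move=> fC ab lohi falo hifb.
have [t2 [/andP [at2 t2b] ft2 below_t2]] :=
  exists_first_hit fC ab (le_lt_trans falo lohi) hifb.
(* the last visit of [lo] before [t2] is a first hit of the time-reversed path *)
pose g u := - f (t2 - u).
have gC : continuous g.
  move=> x; apply: continuousN; apply: continuous_comp; last exact: fC.
  by apply: continuousB; [exact: cvg_cst | exact: cvg_id].
have [t [/andP [t0 tt2] gt below_t]] : exists t, [/\ 0 <= t <= t2 - a, g t = - lo &
    forall u, 0 <= u < t -> g u < - lo].
  apply: exists_first_hit => //; rewrite /g.
  - by rewrite subr_ge0.
  - by rewrite subr0 ft2 ltrN2.
  - by rewrite opprB addrC subrK lerN2.
exists (t2 - t), t2; split => //.
- by apply/andP; split; lra.
- by move: gt; rewrite /g => /oppr_inj.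
move=> u /andP [t1u ut2]; apply/andP; split.
- have [lt_t|ge_t] := ltP (t2 - u) t.
    by apply/ltW; rewrite -ltrN2 -[u](subKr t2); apply: below_t; apply/andP; split; lra.
  have -> : u = t2 - t by lra.
  by move: gt; rewrite /g => /oppr_inj ->.
- have [lt_t2|ge_t2] := ltP u t2; first by apply/ltW/below_t2; apply/andP; split; lra.
  have -> : u = t2 by lra.
  by rewrite ft2.
Qed.

Lemma bm_I01_0 : bm_I01 (0 : R).
Proof. by rewrite /bm_I01 /= lexx ler01. Qed.

Lemma bm_I01_1 : bm_I01 (1 : R).
Proof. by rewrite /bm_I01 /= lexx ler01. Qed.

Definition clamp01 t : R := Num.min 1 (Num.max 0 t).

Lemma clamp01_I01 t : bm_I01 (clamp01 t).
Proof. by rewrite /bm_I01 /clamp01 /= le_min ler01 le_max lexx ge_min lexx. Qed.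

Lemma clamp01_id t : bm_I01 t -> clamp01 t = t.
Proof. by case/andP=> t0 t1; rewrite /clamp01 (max_r t0) (min_r t1). Qed.

Lemma clamp01_le0 t : t <= 0 -> clamp01 t = 0.
Proof. by move=> t0; rewrite /clamp01 max_l // min_r. Qed.

Lemma clamp01_ge1 t : 1 <= t -> clamp01 t = 1.
Proof. by move=> t1; rewrite /clamp01 max_r ?min_l //; lra. Qed.

Lemma continuous_clamp01 : continuous clamp01.
Proof.
move=> x; apply: continuous_min; first exact: cvg_cst.
by apply: continuous_max; [exact: cvg_cst | exact: cvg_id].
Qed.

Lemma continuous_comp_clamp01 (T : topologicalType) (g : R -> T) :
  {within @bm_I01 R, continuous g} -> continuous (g \o clamp01).
Proof.
move=> /subspace_continuousP gC x.
have clamp01_within : clamp01 @ x --> within (@bm_I01 R) (nbhs (clamp01 x)).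
  move=> P IP; change (nbhs x (fun t => P (clamp01 t))).
  have : nbhs x (fun t => bm_I01 (clamp01 t) -> P (clamp01 t)).
    exact: (@continuous_clamp01 x _ IP).
  by apply: filterS => t; apply; apply: clamp01_I01.
exact: cvg_comp clamp01_within (gC _ (clamp01_I01 x)).
Qed.

End RealLinePaths.

Arguments bm_I01_0 {R}.
Arguments bm_I01_1 {R}.
Arguments clamp01 {R}.

Section Barycenter.
Variables (R : realType) (s : seq (R * R)) (w : R * R -> R).

Definition mass : R := \sum_(c <- s) w c.

Definition barycenter : R * R :=
  ((\sum_(c <- s) w c * c.1) / mass, (\sum_(c <- s) w c * c.2) / mass).

Lemma sum_sqdist_huygens z : mass != 0 ->
  \sum_(c <- s) w c * sqdist z c =
    mass * sqdist z barycenter + \sum_(c <- s) w c * sqdist barycenter c.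
Proof.
have expand y : \sum_(c <- s) w c * sqdist y c =
    mass * (y.1 ^+ 2 + y.2 ^+ 2) - 2 * y.1 * \sum_(c <- s) w c * c.1
    - 2 * y.2 * \sum_(c <- s) w c * c.2 + \sum_(c <- s) w c * (c.1 ^+ 2 + c.2 ^+ 2).
  rewrite /mass; elim: s => [|c t IH]; first by rewrite !big_nil; ring.
  by rewrite !big_cons IH /sqdist; ring.
by move=> m0; rewrite !expand /barycenter /sqdist /=; field.
Qed.

Hypothesis w_ge0 : forall c, c \in s -> 0 <= w c.

Lemma mass_gt0 c : c \in s -> 0 < w c -> 0 < mass.
Proof.
move=> cs wc; have m_ge0 : 0 <= mass by rewrite /mass big_seq sumr_ge0.
rewrite lt_def m_ge0 andbT /mass big_seq psumr_neq0 //.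
by apply/hasP; exists c; rewrite ?cs.
Qed.

Lemma ler_wsum (F G : R * R -> R) : (forall c, c \in s -> 0 < w c -> F c <= G c) ->
  \sum_(c <- s) w c * F c <= \sum_(c <- s) w c * G c.
Proof.
move=> FG; rewrite big_seq [leRHS]big_seq; apply: ler_sum => c cs.
have := w_ge0 cs; rewrite le_eqVlt => /orP [/eqP <-|wc]; first by rewrite !mul0r.
by rewrite ler_pM2l // FG.
Qed.

Lemma weighted_mean_bounds (f : R * R -> R) lo hi : 0 < mass ->
  (forall c, c \in s -> 0 < w c -> lo <= f c <= hi) ->
  lo <= (\sum_(c <- s) w c * f c) / mass <= hi.
Proof.
move=> m0 f_bd; rewrite ler_pdivlMr // ler_pdivrMr // !(mulrC _ mass) /mass !mulr_suml.
by rewrite !ler_wsum // => c cs wc; case/andP: (f_bd c cs wc).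
Qed.

(* By Huygens' formula the weighted mean of |z - c|^2 exceeds that of |p - c|^2
   (at most rho^2) by |z - b|^2 - |p - b|^2 < 1 - rho^2, so it is below 1. *)
Lemma barycenter_near_center p rho z : 0 < mass ->
  (forall c, c \in s -> 0 < w c -> sqdist p c <= rho ^+ 2) ->
  sqdist z barycenter < sqdist p barycenter + (1 - rho ^+ 2) ->
  exists2 c, c \in s & sqdist z c < 1.
Proof.
move=> m0 p_near zb; have m_neq0 : mass != 0 by rewrite gt_eqF.
have wp : \sum_(c <- s) w c * sqdist p c <= mass * rho ^+ 2.
  by rewrite /mass mulr_suml; apply: ler_wsum.
have wz : \sum_(c <- s) w c * sqdist z c < mass.
  have : mass * (sqdist z barycenter - sqdist p barycenter) < mass * (1 - rho ^+ 2).
    by rewrite ltr_pM2l //; lra.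
  move: wp; rewrite (sum_sqdist_huygens p) // (sum_sqdist_huygens z) //; lra.
have [//|no_c] := pselect (exists2 c, c \in s & sqdist z c < 1).
suff : mass <= \sum_(c <- s) w c * sqdist z c by lra.
have -> : mass = \sum_(c <- s) w c * 1 by under eq_bigr do rewrite mulr1.
apply: ler_wsum => c cs _.
by rewrite leNgt; apply/negP => zc; apply: no_c; exists c.
Qed.

End Barycenter.

Lemma continuous_barycenter (R : realType) (T : topologicalType) (s : seq (R * R))
    (W : R * R -> T -> R) :
  (forall c, continuous (W c)) -> (forall t, mass s (W^~ t) != 0) ->
  continuous (fun t => barycenter s (W^~ t)).
Proof.
move=> WC m0 x.
have sumC (f : R * R -> R) : continuous (fun t => \sum_(c <- s) W c t * f c).
  apply: continuous_big => [|c _]; first exact: add_continuous.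
  by move=> y; apply: continuousM; [exact: WC | exact: cvg_cst].
have massC : continuous (fun t => mass s (W^~ t)).
  by apply: continuous_big => [|c _]; [exact: add_continuous | exact: WC].
have invC : {for x, continuous (fun t => (mass s (W^~ t))^-1)}.
  exact: continuousV (m0 x) (massC x).
exact: cvg_pair (continuousM (sumC fst x) invC) (continuousM (sumC snd x) invC).
Qed.

Section OccupiedDiscs.
Variables (R : realType) (eta : set (R * R)).
Implicit Types (x : R * R) (rr sg : R).

(* [rr] is a squared radius, which keeps square roots out of the estimates *)
Definition occupied_disc x rr := forall z, sqdist z x < rr -> bm_occupied eta 1 z.

Lemma occupied_disc_le x rr1 rr2 : rr1 <= rr2 -> occupied_disc x rr2 -> occupied_disc x rr1.
Proof. by move=> rr12 Ox z zx; apply: Ox; apply: lt_le_trans rr12. Qed.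

Lemma occupied_disc_shift x T D sg : 0 <= sg -> T ^+ 2 + 2 * `|T| * sg <= D ->
  occupied_disc x (D + sg ^+ 2) -> occupied_disc (x.1 + T, x.2) (sg ^+ 2).
Proof.
move=> sg0 TD Ox z; rewrite /sqdist /=; set X := z.1 - (x.1 + T); set Y := z.2 - x.2 => zx.
have X_le : `|X| <= sg.
  by rewrite -(ger0_norm sg0) -ler_sqr ?nnegrE // !real_normK ?num_real //; nra.
have XT : X * T <= `|T| * sg.
  by rewrite (le_trans (ler_norm _)) // normrM mulrC ler_wpM2l.
apply: Ox; rewrite /sqdist.
have -> : (z.1 - x.1) ^+ 2 + Y ^+ 2 = X ^+ 2 + Y ^+ 2 + 2 * (X * T) + T ^+ 2.
  by rewrite /X; ring.
lra.
Qed.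

Lemma occupied_disc_set_dist (A : set (R * R)) sg : 0 <= sg ->
  (forall x, A x -> occupied_disc x (sg ^+ 2)) ->
  (sg%:E <= bm_set_dist A (bm_vacant eta 1))%E.
Proof.
move=> sg0 AO; apply: le_ereal_inf_tmp => _ [x [y [Ax [Vy ->]]]].
rewrite lee_fin leNgt; apply/negP => xy; apply/Vy/(AO _ Ax).
by rewrite sqdistC -bm_edist_ltE.
Qed.

End OccupiedDiscs.

Section SmoothedPath.
Variables (R : realType) (eta : set (R * R)) (r r' B : R) (p : R -> R * R).
Hypotheses (eta_lf : bm_locally_finite eta) (r_lt_r' : r < r') (pC : continuous p).
Hypotheses (p_occ : forall t, bm_occupied eta r (p t))
  (p_bd : forall t, bm_edist (0, 0) (p t) <= B).

Definition bump (c x : R * R) : R := Num.max 0 (r' - bm_edist c x).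

Lemma exists_smoothed_path : exists q : R -> R * R, [/\ continuous q,
  forall t, `|(q t).2 - (p t).2| <= r' &
  forall t, occupied_disc eta (q t) (sqdist (p t) (q t) + (1 - r' ^+ 2))].
Proof.
have [cs cs_eq] := (finite_seqP _).1 (eta_lf (B + r')).
pose W c t := bump c (p t).
have W_ge0 t c : c \in cs -> 0 <= W c t by rewrite /W /bump le_max lexx.
have W_near c t : 0 < W c t -> bm_edist c (p t) < r'.
  by rewrite /W /bump lt_max ltxx subr_gt0.
have covered t : exists2 c, c \in cs & 0 < W c t.
  have [c ec ct] := p_occ t; rewrite /bm_cball /= in ct.
  exists c; last by rewrite /W /bump lt_max subr_gt0 (le_lt_trans ct) ?orbT.
  have : [set` cs] c; last by [].
  rewrite -cs_eq; split => //.
  apply: le_trans (bm_edist_triangle _ (p t) _) _.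
  by rewrite (bm_edistC _ c) lerD ?p_bd // (le_trans ct) ?ltW.
have mass_pos t : 0 < mass cs (W^~ t).
  by have [c cs_c Wc] := covered t; exact: (@mass_gt0 _ cs (W^~ t) (W_ge0 t) c).
exists (fun t => barycenter cs (W^~ t)); split.
- apply: continuous_barycenter => [c|t]; last by rewrite gt_eqF.
  move=> x; have edC : {for x, continuous (fun t => bm_edist c (p t))}.
    exact: continuous_bm_edist pC x.
  exact: (@continuous_max R R (cst 0) _ x (cvg_cst _) (continuousB (cvg_cst _) edC)).
- move=> t; rewrite ler_distl.
  apply: (@weighted_mean_bounds _ cs (W^~ t) (W_ge0 t) snd) => // c _ /W_near.
  by move=> /(le_lt_trans (normB2_le_bm_edist _ _)) /ltW; rewrite -ler_distl.
- move=> t z zq.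
  have [|c cs_c zc] :=
    @barycenter_near_center _ cs (W^~ t) (W_ge0 t) _ _ _ (mass_pos t) _ zq.
    move=> c _ /W_near ct; have r'0 := ltW (le_lt_trans (bm_edist_ge0 _ _) ct).
    by rewrite -bm_edist_leE // bm_edistC ltW.
  exists c; first by have : [set` cs] c by []; rewrite -cs_eq => -[].
  by rewrite /bm_cball /= bm_edist_leE // sqdistC expr1n ltW.
Qed.

End SmoothedPath.

Lemma sqr_shift_le (R : realType) (T m d sg : R) : 0 <= sg ->
  `|T| <= Num.max 0 m -> m + sg <= d -> T ^+ 2 + 2 * `|T| * sg <= d ^+ 2.
Proof.
move=> sg0 Tm md; rewrite -[T ^+ 2](real_normK (num_real T)).
have T0 := normr_ge0 T; have [m0|m0] := leP m 0.
  have -> : `|T| = 0 by move: Tm; rewrite max_l //; lra.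
  by rewrite expr0n /= mulr0 mul0r addr0 sqr_ge0.
move: Tm; rewrite max_r ?(ltW m0) // => Tm; nra.
Qed.

Definition end_shift (R : realType) (u0 u1 t : R) : R :=
  clamp01 (t - 1) * u1 - clamp01 (- t) * u0.

Lemma continuous_end_shift (R : realType) (u0 u1 : R) : continuous (end_shift u0 u1).
Proof.
move=> x; have a1 : {for x, continuous (fun t : R => t - 1)}.
  by apply: continuousB; [exact: cvg_id | exact: cvg_cst].
have a2 : {for x, continuous (fun t : R => - t)} by apply: continuousN; exact: cvg_id.
have l1 := continuous_comp a1 (@continuous_clamp01 R _).
have l2 := continuous_comp a2 (@continuous_clamp01 R _).
exact: continuousB (continuousM l1 (cvg_cst _)) (continuousM l2 (cvg_cst _)).
Qed.

Section HorizontalExtension.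
Variables (R : realType) (eta : set (R * R)) (q : R -> R * R) (N sg a b : R).
Hypotheses (qC : continuous q) (sg0 : 0 <= sg) (a_room : a + sg <= - N)
  (b_room : N + sg <= b).
Hypotheses (q0_occ : occupied_disc eta (q 0) (((q 0).1 - a) ^+ 2 + sg ^+ 2))
  (q1_occ : occupied_disc eta (q 1) (((q 1).1 - b) ^+ 2 + sg ^+ 2))
  (q_occ : forall t, occupied_disc eta (q t) (sg ^+ 2)).

(* [q] is run on [0, 1], preceded on [-1, 0] and followed on [1, 2] by horizontal
   moves of its endpoints, long enough to reach the lines x = -N and x = N. *)
Lemma exists_horizontal_extension : exists Q : R -> R * R, [/\ continuous Q,
  (Q (-1)).1 <= - N, N <= (Q 2).1, forall t, exists u, (Q t).2 = (q u).2 &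
  forall t, occupied_disc eta (Q t) (sg ^+ 2)].
Proof.
pose u0 := Num.max 0 ((q 0).1 + N); pose u1 := Num.max 0 (N - (q 1).1).
pose Q t := ((q (clamp01 t)).1 + end_shift u0 u1 t, (q (clamp01 t)).2).
have [u0_ge0 u1_ge0] : 0 <= u0 /\ 0 <= u1 by rewrite !le_max lexx.
exists Q; split.
- have qcC : continuous (fun t => q (clamp01 t)).
    by move=> x; exact: continuous_comp (@continuous_clamp01 R x) (@qC _).
  move=> x; have Q1C : {for x, continuous (fun t => (q (clamp01 t)).1 + end_shift u0 u1 t)}.
    exact: continuousD (continuous_comp (qcC x) cvg_fst) (@continuous_end_shift R u0 u1 x).
  exact: cvg_pair Q1C (continuous_comp (qcC x) cvg_snd).
- rewrite /= /end_shift opprK (@clamp01_ge1 R 1) // !clamp01_le0; try lra.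
  have : (q 0).1 + N <= u0 by rewrite le_max lexx orbT.
  by rewrite mul0r mul1r sub0r; lra.
- rewrite /= /end_shift (@clamp01_le0 R (- 2)) ?(@clamp01_ge1 R 2) ?clamp01_ge1; try lra.
  have : N - (q 1).1 <= u1 by rewrite le_max lexx orbT.
  by rewrite mul0r subr0 mul1r; lra.
- by move=> t; exists (clamp01 t).
have lam_le (t u : R) : 0 <= u -> `|clamp01 t * u| <= u.
  move=> u_ge0; have /andP [c0 c1] := clamp01_I01 t.
  by rewrite normrM !ger0_norm // ler_piMl.
have room t : exists2 D, end_shift u0 u1 t ^+ 2 + 2 * `|end_shift u0 u1 t| * sg <= D &
    occupied_disc eta (q (clamp01 t)) (D + sg ^+ 2).
  have [t_le0|t_gt0] := leP t 0.
    exists (((q 0).1 - a) ^+ 2); last by rewrite clamp01_le0.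
    have -> : end_shift u0 u1 t = - (clamp01 (- t) * u0).
      by rewrite /end_shift clamp01_le0 ?mul0r ?sub0r //; lra.
    rewrite normrN sqrrN.
    apply: (@sqr_shift_le _ _ ((q 0).1 + N)) => //; first exact: lam_le.
    by have := a_room; lra.
  have [t_le1|t_gt1] := leP t 1.
    exists 0; last by rewrite add0r.
    rewrite /end_shift !clamp01_le0 ?mul0r ?subr0 ?normr0; lra.
  exists (((q 1).1 - b) ^+ 2); last by rewrite clamp01_ge1 ?ltW.
  have -> : end_shift u0 u1 t = clamp01 (t - 1) * u1.
    by rewrite /end_shift (@clamp01_le0 _ (- t)) ?mul0r ?subr0 //; lra.
  rewrite -[((q 1).1 - b) ^+ 2]sqrrN opprB.
  apply: (@sqr_shift_le _ _ (N - (q 1).1)) => //; first exact: lam_le.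
  by have := b_room; lra.
by move=> t; have [D shiftD qD] := room t; exact: occupied_disc_shift sg0 shiftD qD.
Qed.

End HorizontalExtension.

Lemma exists_crossing_subpath (R : realType) (Q : R -> R * R) (N a b : R) :
  continuous Q -> 0 < N -> a <= b -> (Q a).1 <= - N -> N <= (Q b).1 ->
  (forall t, - N <= (Q t).2 <= N) ->
  exists G, bm_crossing_path N N G /\ forall u, exists t, G u = Q t.
Proof.
move=> QC N0 ab Qa Qb Q_snd.
have Q1C : continuous (fun t => (Q t).1) by move=> x; exact: continuous_comp (QC x) cvg_fst.
have NN : - N < N by lra.
have [t1 [t2 [/andP [at1 t12] t2b Qt1 Qt2 Q_fst]]] :=
  exists_crossing_subinterval Q1C ab NN Qa Qb.
pose G u := Q (t1 + u * (t2 - t1)).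
exists G; split; last by move=> u; exists (t1 + u * (t2 - t1)).
split; [|split; [|split]].
- apply: continuous_subspaceT => x.
  have affC : {for x, continuous (fun u : R => t1 + u * (t2 - t1))}.
    apply: continuousD; first exact: cvg_cst.
    by apply: continuousM; [exact: cvg_id | exact: cvg_cst].
  exact: continuous_comp affC (QC _).
- move=> u /andP [u0 u1]; split; last exact: Q_snd.
  apply: Q_fst; rewrite lerDl mulr_ge0 ?subr_ge0 //=.
  by rewrite -lerBrDl ler_piMl ?subr_ge0.
- by rewrite /G mul0r addr0.
- by rewrite /G mul1r addrC subrK.
Qed.

Lemma sqrt_1_sqr_le_of_gt (R : realType) (i w : R) : 0 <= i -> 0 <= w ->
  (forall r', i < r' < 1 -> Num.sqrt (1 - r' ^+ 2) <= w) -> Num.sqrt (1 - i ^+ 2) <= w.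
Proof.
move=> i0 w0 near_i; rewrite leNgt; apply/negP => w_lt.
have w_sqr : w ^+ 2 < 1 - i ^+ 2.
  have pos : 0 < 1 - i ^+ 2 by rewrite -sqrtr_gt0 (le_lt_trans w0).
  by rewrite -[X in _ < X](sqr_sqrtr (ltW pos)) ltr_pXn2r ?nnegrE ?sqrtr_ge0.
have [k k0 k_sqr] : exists2 k : R, 0 <= k & k ^+ 2 = 1 - w ^+ 2.
  by exists (Num.sqrt (1 - w ^+ 2)); rewrite ?sqrtr_ge0 // sqr_sqrtr //; nra.
have ik : i < k by rewrite -(@ltr_pXn2r _ 2) ?nnegrE // k_sqr; lra.
have r'_lt : (i + k) / 2 < k by lra.
have r'_ge0 : 0 <= (i + k) / 2 by lra.
have r'_sqr : ((i + k) / 2) ^+ 2 < k ^+ 2 by rewrite ltr_pXn2r ?nnegrE.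
have : Num.sqrt (1 - ((i + k) / 2) ^+ 2) <= w by apply: near_i; apply/andP; nra.
rewrite leNgt => /negP; apply.
have w2_ge0 := sqr_ge0 w; rewrite -(ger0_norm w0) -sqrtr_sqr ltr_sqrt; lra.
Qed.

Section OccupiedWidth.
Variables (R : realType) (eta : set (R * R)) (N : R).
Hypothesis eta_lf : bm_locally_finite eta.

Lemma exists_occupied_crossing_away_from_vacant (r r' : R) (g : R -> R * R) :
  0 <= r -> r < r' -> r' < 1 ->
  bm_crossing_path (N + Num.sqrt (1 - r ^+ 2)) (N - 1) g ->
  (forall t, bm_I01 t -> bm_occupied eta r (g t)) ->
  exists G, [/\ bm_crossing_path N N G, forall t, bm_I01 t -> bm_occupied eta 1 (G t) &
    ((Num.sqrt (1 - r' ^+ 2))%:E <= bm_set_dist (G @` @bm_I01 R) (bm_vacant eta 1))%E].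
Proof.
move=> r0 rr' r'1 [gC [g_rect [g0 g1]]] g_occ.
set s := Num.sqrt (1 - r ^+ 2) in g_rect g0 g1 *; set sg := Num.sqrt (1 - r' ^+ 2).
have sg_sqr : sg ^+ 2 = 1 - r' ^+ 2 by rewrite sqr_sqrtr // subr_ge0; nra.
have sg_gt0 : 0 < sg by rewrite sqrtr_gt0 subr_gt0; nra.
have sg_le_s : sg <= s by rewrite ler_sqrt ?subr_ge0; nra.
have N1 : 1 <= N by case: (g_rect 0 bm_I01_0) => _ /andP [? ?]; lra.
pose p t := g (clamp01 t).
have pC : continuous p := continuous_comp_clamp01 gC.
have p_rect t : bm_rect (N + s) (N - 1) (p t) := g_rect _ (clamp01_I01 t).
have p_bd t : bm_edist (0, 0) (p t) <= (N + s) + (N - 1).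
  have [/andP [x1 x2] /andP [y1 y2]] := p_rect t.
  apply: le_trans (bm_edist_le_normD _ _) _; rewrite !sub0r !normrN.
  by apply: lerD; rewrite ler_norml; apply/andP; split; lra.
have [q [qC q_snd q_occ]] :=
  exists_smoothed_path eta_lf rr' pC (fun t => g_occ _ (clamp01_I01 t)) p_bd.
have q_room t x : (p t).1 = x -> occupied_disc eta (q t) (((q t).1 - x) ^+ 2 + sg ^+ 2).
  move=> <-; apply: occupied_disc_le (q_occ t).
  by rewrite sg_sqr lerD2r sqdistC sqrB1_le_sqdist.
have p0 : (p 0).1 = - (N + s) by rewrite /p clamp01_id //; exact: bm_I01_0.
have p1 : (p 1).1 = N + s by rewrite /p clamp01_id //; exact: bm_I01_1.
have q_sg t : occupied_disc eta (q t) (sg ^+ 2).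
  by apply: occupied_disc_le (q_occ t); rewrite sg_sqr lerDr sqdist_ge0.
have a_room : - (N + s) + sg <= - N by lra.
have b_room : N + sg <= N + s by lra.
have [Q [QC Qm1 Q2 Q_snd Q_occ]] := exists_horizontal_extension qC (ltW sg_gt0)
  a_room b_room (q_room 0 _ p0) (q_room 1 _ p1) q_sg.
have Q_snd_bd t : - N <= (Q t).2 <= N.
  have [u ->] := Q_snd t; have := q_snd u; rewrite ler_distl.
  by case: (p_rect u) => _ /andP [? ?] /andP [? ?]; apply/andP; split; lra.
have N0 : 0 < N by lra.
have m12 : -1 <= 2 :> R by lra.
have [G [G_cross G_Q]] := exists_crossing_subpath QC N0 m12 Qm1 Q2 Q_snd_bd.
exists G; split => //.
- by move=> u _; have [t ->] := G_Q u; apply: (Q_occ t); rewrite sqdistxx exprn_gt0.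
- apply: occupied_disc_set_dist (ltW sg_gt0) _ => _ [u _ <-].
  by have [t ->] := G_Q u; exact: Q_occ.
Qed.

Lemma sqrt_inf_occupied_crossing_le_sup0 :
  ((Num.sqrt (1 - (bm_inf1 [set r : R | 0 <= r <= 1 /\
        bm_cross (bm_occupied eta r) (N + Num.sqrt (1 - r ^+ 2)) (N - 1)]) ^+ 2))%:E
   <= bm_sup0 [set d | exists g, bm_crossing_path N N g /\
     (forall t, bm_I01 t -> bm_occupied eta 1 (g t)) /\
     d = bm_set_dist (g @` @bm_I01 R) (bm_vacant eta 1)])%E.
Proof.
set A := [set r | _]; rewrite bm_sup0E; last by move=> _ [g [_ [_ ->]]]; exact: bm_set_dist_ge0.
set W := ereal_sup _.
have W0 : (0 <= W)%E by apply: ereal_sup_ubound; right.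
have A_W r r' : A r -> r < r' < 1 -> ((Num.sqrt (1 - r' ^+ 2))%:E <= W)%E.
  move=> [/andP [r0 _] [g [g_cross g_occ]]] /andP [rr' r'1].
  have [G [G_cross G_occ G_dist]] :=
    exists_occupied_crossing_away_from_vacant r0 rr' r'1 g_cross g_occ.
  by apply: le_trans G_dist (ereal_sup_ubound _); left; exists G.
rewrite /bm_inf1; case: asboolP => [_|/eqP/set0P A_n0].
  by rewrite expr1n subrr sqrtr0.
move: W0 A_W; clearbody W; case: W => [w||] //= w0 A_w; last by rewrite leey.
rewrite lee_fin in w0 *; apply: sqrt_1_sqr_le_of_gt => //.
  by apply: lb_le_inf A_n0 _ => r [/andP []].
move=> r' /andP [ir' r'1]; have [r Ar rr'] := inf_lt A_n0 ir'.
by rewrite -lee_fin; apply: A_w Ar _; rewrite rr' r'1.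
Qed.

End OccupiedWidth.

Theorem lemma3p1 (R : realType) (lambda : R) (hlambda : 0 < lambda)
  (eta : set (R * R)) (heta : bm_locally_finite eta) (n : nat) :
  bm_w_vac eta n%:R =
    (2%:E * bm_sup0 [set d | exists e : R, (0 <= e)%R /\
        bm_cross_star (bm_vacant eta (1 + e)%R) n%:R /\ d = e%:E])%E
  /\
  ((2 * Num.sqrt (1 - (bm_inf1 [set r : R | 0 <= r <= 1 /\
        bm_cross (bm_occupied eta r) (n%:R + Num.sqrt (1 - r ^+ 2)) (n%:R - 1)]) ^+ 2))%:E
     <= bm_w_occ eta n%:R)%E.
Proof.
split; first by rewrite /bm_w_vac sup0_dist_vacant_crossing.
rewrite /bm_w_occ EFinM; apply: lee_wpmul2l; first by rewrite lee_fin.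
exact: sqrt_inf_occupied_crossing_le_sup0.
Qed.
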